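(* Let $T>0$ and let $G:\mathbb{R}\leadsto\mathbb{R}$ be a Lipschitz continuous set-valued map with nonempty, convex, closed values. Let $U,W:[0,T]\times\mathbb{R}\to\mathbb{R}$ be continuous functions such that: (U1) for every $x\in\mathrm{Sol}(G)$ and all $t_1<t_2$ in $[0,T]$, $U(t_1,x(t_1))\geqslant U(t_2,x(t_2))$; (U2) for every $(t_0,x_0)\in[0,T]\times\mathbb{R}$ there is $\bar x\in\mathrm{Sol}_G(t_0,x_0)$ with $U(t,\bar x(t))=U(t_0,x_0)$ for all $t\in[0,t_0]$; (W1) for every $x\in\mathrm{Sol}(G)$ and all $t_1<t_2$ in $[0,T]$, $W(t_1,x(t_1))\geqslant W(t_2,x(t_2))$; (W2) for every $(t_0,x_0)\in[0,T]\times\mathbb{R}$ there is $\tilde x\in\mathrm{Sol}_G(t_0,x_0)$ with $W(t_0,x_0)=W(t,\tilde x(t))$ for all $t\in[t_0,T]$. If $U(0,\cdot)=W(0,\cdot)$ and $U(T,\cdot)=W(T,\cdot)$, then $U=W$ on $[0,T]\times\mathbb{R}$.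
   Context: $\mathrm{Sol}(G)$ is the set of absolutely continuous $x:[0,T]\to\mathbb{R}$ with $\dot x(t)\in G(x(t))$ for a.e. $t\in[0,T]$, and $\mathrm{Sol}_G(t_0,x_0)$ is the subset of those with $x(t_0)=x_0$. *)

From HB Require Import structures.
From mathcomp Require Import all_boot all_order all_algebra.
From mathcomp Require Import all_classical all_reals all_analysis.
Set Implicit Arguments. Unset Strict Implicit. Unset Printing Implicit Defensive.
Import Order.TTheory GRing.Theory Num.Theory.
Import numFieldNormedType.Exports.
Local Open Scope classical_set_scope.
Local Open Scope ring_scope.

Definition abs_cont_on (R : realType) (a b : R) (x : R -> R) : Prop :=
  forall eps : R, 0 < eps -> exists2 delta : R, 0 < delta &
    forall (n : nat) (l r : nat -> R),
      (forall i, (i < n)%N -> a <= l i /\ l i <= r i /\ r i <= b) ->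
      (forall i j, (i < n)%N -> (j < n)%N -> i <> j -> r i <= l j \/ r j <= l i) ->
      \sum_(i < n) (r i - l i) < delta ->
      \sum_(i < n) `|x (r i) - x (l i)| < eps.

(* Sol(G) on [0,T]: absolutely continuous x with x'(t) in G(x(t)) for a.e. t in [0,T].
   Functions are taken on all of R, only their restriction to [0,T] matters. *)
Definition Sol (R : realType) (T : R) (G : R -> set R) (x : R -> R) : Prop :=
  abs_cont_on 0 T x /\
  {ae (@lebesgue_measure R), forall t, t \in `[0, T] ->
      derivable x t 1 /\ G (x t) ('D_1 x t)}.

Definition Sol_at (R : realType) (T : R) (G : R -> set R) (t0 x0 : R) (x : R -> R) : Prop :=
  Sol T G x /\ x t0 = x0.

Definition setval_lipschitz (R : realType) (G : R -> set R) : Prop :=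
  exists L : R, 0 <= L /\ forall y z v, G y v -> exists2 w, G z w & `|v - w| <= L * `|y - z|.

Definition convex_valued (R : realType) (G : R -> set R) : Prop :=
  forall y v w (l : R), G y v -> G y w -> 0 <= l -> l <= 1 -> G y (l * v + (1 - l) * w).

From HB Require Import structures.
From mathcomp Require Import all_boot all_order all_algebra.
From mathcomp Require Import all_classical all_reals all_analysis.
From mathcomp Require Import lra.
Set Implicit Arguments. Unset Strict Implicit. Unset Printing Implicit Defensive.
Import Order.TTheory GRing.Theory Num.Theory.
Import numFieldNormedType.Exports.
Local Open Scope classical_set_scope.
Local Open Scope ring_scope.

(* Fix (t0, x0) and put c = U t0 x0, d = W t0 x0.  The U-constant backward
   solution from (t0, x0) reaches time 0 at a point y0 with U 0 y0 = c;
   following the W-constant forward solution from (t0, x0) up to time T and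
   then a U-constant backward solution down to time 0 gives y1 with
   U 0 y1 = d (using U = W at time T).  Since W <= U and U is nonincreasing
   along solutions, the W-constant forward solution from any (0, y) is also
   U-constant.  When y lies between y0 and y1, the intermediate value theorem
   makes it cross one of the two broken curves above, so U 0 y is c or d.
   By continuity U 0 cannot jump between these values on [y0, y1], so c = d. *)

Section Clamp.
Variable R : realType.
Implicit Types a b s t : R.

Definition clamp a b t := Num.min (Num.max t a) b.

Lemma clamp_id a b t : a <= t -> t <= b -> clamp a b t = t.
Proof. by move=> a_t tb; rewrite /clamp (max_l a_t) (min_l tb). Qed.

Lemma clamp_lo a b t : a <= b -> t <= a -> clamp a b t = a.
Proof. by move=> ab ta; rewrite /clamp (max_r ta) (min_l ab). Qed.

Lemma clamp_hi a b t : a <= b -> b <= t -> clamp a b t = b.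
Proof. by move=> ab bt; rewrite /clamp (max_l (le_trans ab bt)) (min_r bt). Qed.

Lemma clamp_itv a b t : a <= b -> a <= clamp a b t <= b.
Proof.
move=> ab; case: (leP t a) => [ta|/ltW a_t]; first by rewrite clamp_lo ?lexx ?ab.
case: (leP t b) => [tb|/ltW bt]; first by rewrite clamp_id ?a_t.
by rewrite clamp_hi ?lexx ?ab.
Qed.

Lemma dist_clamp_le a b s t : a <= b -> `|clamp a b s - clamp a b t| <= `|s - t|.
Proof.
move=> ab; wlog st : s t / s <= t.
  by move=> wl; case: (leP s t) => [/wl//|/ltW/wl]; rewrite distrC [`|s - t|]distrC.
rewrite [`|s - t|]distrC [`|t - s|]ger0_norm ?subr_ge0 // ler_norml /clamp.
case: (leP s a) => h1; case: (leP t a) => h2;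
rewrite ?(max_r h1) ?(max_r h2) ?(max_l (ltW h1)) ?(max_l (ltW h2));
case: (leP s b) => h3; case: (leP t b) => h4;
rewrite ?(min_l ab) ?(min_l h3) ?(min_l h4) ?(min_r (ltW h3)) ?(min_r (ltW h4));
apply/andP; split; lra.
Qed.
End Clamp.

Section RealContinuity.
Variable R : realType.

Lemma abs_cont_onW (a b a' b' : R) (x : R -> R) :
  a <= a' -> b' <= b -> abs_cont_on a b x -> abs_cont_on a' b' x.
Proof.
move=> aa' b'b acx e e0; have [d d0 Hd] := acx e e0; exists d => // n l r lr.
apply: Hd => i /lr[al [lr' rb]]; split; [exact: le_trans al|split=> //].
exact: le_trans b'b.
Qed.

Lemma abs_cont_on_clamp_continuous (a b : R) (x : R -> R) :
  a <= b -> abs_cont_on a b x -> continuous (fun t => x (clamp a b t)).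
Proof.
move=> ab acx t; apply/cvgrPdist_lt => e e0; have [d d0 Hd] := acx e e0.
have small u v : a <= u -> u <= v -> v <= b -> v - u < d -> `|x v - x u| < e.
  move=> au uv vb vud; have := Hd 1%N (fun=> u) (fun=> v); rewrite !big_ord1.
  by apply=> // -[|i] [|j].
have /cvgrPdist_lt/(_ d d0) := @cvg_id _ (nbhs t); apply: filterS => s /= ts.
have /andP[act ctb] := clamp_itv t ab; have /andP[acs csb] := clamp_itv s ab.
have cd := le_lt_trans (dist_clamp_le t s ab) ts.
case: (leP (clamp a b t) (clamp a b s)) => [ts'|/ltW st'].
  by rewrite distrC; apply: small => //; apply: le_lt_trans cd; rewrite distrC ler_norm.
by apply: small => //; apply: le_lt_trans cd; rewrite ler_norm.
Qed.

Lemma continuous_crossing (f g : R -> R) (a b : R) :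
  a <= b -> continuous f -> continuous g -> (f a - g a) * (f b - g b) <= 0 ->
  exists2 s, a <= s <= b & f s = g s.
Proof.
move=> ab fc gc sgn; have fgc : continuous (f \- g) by move=> t; exact: cvgB (fc t) (gc t).
have sign_change : Num.min (f a - g a) (f b - g b) <= 0 <= Num.max (f a - g a) (f b - g b).
  by case: (leP (f a - g a) (f b - g b)) => h;
     rewrite ?(min_l h) ?(max_r h) ?(min_r (ltW h)) ?(max_l (ltW h)); apply/andP; split; nra.
have [s] := IVT ab (continuous_subspaceT fgc) sign_change.
by rewrite in_itv /= => sab /eqP; rewrite subr_eq0 => /eqP; exists s.
Qed.

Lemma continuous_within_slice (f : R * R -> R) (A : set (R * R)) t :
  {within A, continuous f} -> (forall y, A (t, y)) -> continuous (fun y => f (t, y)).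
Proof.
move=> /subspace_continuousP fA At y; apply: cvg_comp (fA _ (At y)).
move=> B /(cvg_pair (cvg_cst t) (@cvg_id _ (nbhs y))).
exact: filterS (fun y' (AB : A (t, y') -> B (t, y')) => AB (At y')).
Qed.

Lemma continuous_two_valued_eq (f : R -> R) (a b c d : R) :
  continuous f -> f a = c -> f b = d ->
  (forall y, (y - a) * (y - b) <= 0 -> f y = c \/ f y = d) -> c = d.
Proof.
move=> fc; wlog ab : a b c d / a <= b.
  move=> wl fa fb two; case: (leP a b) => [ab|/ltW ba]; first exact: wl fa fb two.
  by apply/esym/(wl b a) => // y; rewrite mulrC => /two[]; [right|left].
move=> <- <- two.
have [|m] := IVT (v := (f a + f b) / 2) ab (continuous_subspaceT fc).
  by case: (leP (f a) (f b)) => h;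
     rewrite ?(min_l h) ?(max_r h) ?(min_r (ltW h)) ?(max_l (ltW h)); apply/andP; split; lra.
rewrite in_itv /= => /andP[am mb] fm.
have /two[] : (m - a) * (m - b) <= 0 by nra.
  all: lra.
Qed.

End RealContinuity.

Lemma Sol_clamp_continuous (R : realType) (T : R) (G : R -> set R) (x : R -> R) (a b : R) :
  Sol T G x -> 0 <= a -> a <= b -> b <= T -> continuous (fun t => x (clamp a b t)).
Proof.
move=> [acx _] a0 ab bT; apply: abs_cont_on_clamp_continuous => //.
exact: abs_cont_onW acx.
Qed.

Section LevelSets.
Variables (R : realType) (T : R) (G : R -> set R) (U W : R -> R -> R).
Hypotheses (T_ge0 : 0 <= T)
  (U_nonincr : forall x, Sol T G x -> forall t1 t2, 0 <= t1 -> t1 < t2 -> t2 <= T ->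
      U t2 (x t2) <= U t1 (x t1))
  (U_backward : forall t0 x0, 0 <= t0 -> t0 <= T ->
      exists2 xb, Sol_at T G t0 x0 xb &
        forall t, 0 <= t -> t <= t0 -> U t (xb t) = U t0 x0)
  (W_nonincr : forall x, Sol T G x -> forall t1 t2, 0 <= t1 -> t1 < t2 -> t2 <= T ->
      W t2 (x t2) <= W t1 (x t1))
  (W_forward : forall t0 x0, 0 <= t0 -> t0 <= T ->
      exists2 xt, Sol_at T G t0 x0 xt &
        forall t, t0 <= t -> t <= T -> W t0 x0 = W t (xt t))
  (UW0 : forall y, U 0 y = W 0 y) (UWT : forall y, U T y = W T y).

Lemma W_le_U s p : 0 <= s -> s <= T -> W s p <= U s p.
Proof.
move=> s0 sT; have [xb [xb_sol xbs] xb_level] := U_backward p s0 sT.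
move: s0; rewrite le0r => /predU1P[->|s_gt0]; first by rewrite UW0.
by rewrite -(xb_level 0 (lexx 0) (ltW s_gt0)) UW0 -{1}xbs; apply: W_nonincr.
Qed.

Definition on_level (L : R -> R) (l : R) :=
  forall s, 0 <= s -> s <= T -> U s (L s) = l /\ W s (L s) = l.

Lemma forward_level_sol y : exists2 L, Sol_at T G 0 y L & on_level L (U 0 y).
Proof.
have [L [L_sol L0] L_level] := W_forward y (lexx 0) T_ge0.
exists L => // s s0 sT; have Ws : W s (L s) = U 0 y by rewrite -L_level // UW0.
split=> //; apply/eqP; rewrite eq_le -{2}Ws W_le_U // andbT.
move: s0; rewrite le0r => /predU1P[->|s_gt0]; first by rewrite L0.
by rewrite -L0; apply: U_nonincr.
Qed.

Section Crossing.
Variables (t0 x0 : R) (xb xt v : R -> R).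
Hypotheses (t0_ge0 : 0 <= t0) (t0_leT : t0 <= T)
  (xb_sol : Sol_at T G t0 x0 xb)
  (xb_level : forall t, 0 <= t -> t <= t0 -> U t (xb t) = U t0 x0)
  (xt_sol : Sol_at T G t0 x0 xt)
  (xt_level : forall t, t0 <= t -> t <= T -> W t0 x0 = W t (xt t))
  (v_sol : Sol_at T G T (xt T) v)
  (v_level : forall t, 0 <= t -> t <= T -> U t (v t) = U T (xt T)).

(* xb on [0, t0] followed by xt on [t0, T], extended continuously to R *)
Let path t := xb (clamp 0 t0 t) + xt (clamp t0 T t) - x0.

Lemma level_meets_path L l : Sol T G L -> on_level L l ->
  (L 0 - xb 0) * (L T - xt T) <= 0 -> l = U t0 x0 \/ l = W t0 x0.
Proof.
move=> L_sol L_level sgn.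
have path_cont : continuous path.
  move=> t; apply: cvgB (cvg_cst x0); apply: cvgD.
    exact: Sol_clamp_continuous xb_sol.1 (lexx 0) t0_ge0 t0_leT t.
  exact: Sol_clamp_continuous xt_sol.1 t0_ge0 t0_leT (lexx T) t.
have path_le t : 0 <= t -> t <= t0 -> path t = xb t.
  by move=> t_ge0 t_le; rewrite /path clamp_id // clamp_lo // xt_sol.2 addrK.
have path_ge t : t0 <= t -> t <= T -> path t = xt t.
  by move=> t_ge t_le; rewrite /path clamp_hi // clamp_id // xb_sol.2 addrAC subrr add0r.
have [|s /andP[s0 sT]] := continuous_crossing T_ge0
  (Sol_clamp_continuous L_sol (lexx 0) T_ge0 (lexx T)) path_cont.
  by rewrite !clamp_id ?lexx // path_le ?lexx // path_ge ?lexx.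
rewrite clamp_id // => Ls; have [Us Ws] := L_level s s0 sT.
have [st0|/ltW t0s] := leP s t0.
  by left; rewrite -Us Ls path_le // xb_level.
by right; rewrite -Ws Ls path_ge // -xt_level.
Qed.

Lemma level_meets_v L l : Sol T G L -> on_level L l ->
  (L 0 - v 0) * (L T - xt T) <= 0 -> l = W t0 x0.
Proof.
move=> L_sol L_level sgn.
have [|s /andP[s0 sT]] := continuous_crossing T_ge0
  (Sol_clamp_continuous L_sol (lexx 0) T_ge0 (lexx T))
  (Sol_clamp_continuous v_sol.1 (lexx 0) T_ge0 (lexx T)).
  by rewrite !clamp_id ?lexx // v_sol.2.
rewrite !clamp_id // => Ls; have [<- _] := L_level s s0 sT.
by rewrite Ls v_level // UWT -xt_level.
Qed.

Lemma U0_two_valued y : (y - xb 0) * (y - v 0) <= 0 ->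
  U 0 y = U t0 x0 \/ U 0 y = W t0 x0.
Proof.
move=> between; have [L [L_sol L0] L_level] := forward_level_sol y.
have [cross_path|cross_v] := leP ((y - xb 0) * (L T - xt T)) 0.
  by apply: (level_meets_path L_sol L_level); rewrite L0.
right; apply: (level_meets_v L_sol L_level); rewrite L0.
have := mulr_le0_ge0 between (sqr_ge0 (L T - xt T)); nra.
Qed.

End Crossing.
End LevelSets.

Theorem theorem5p4 (R : realType) (T : R) (G : R -> set R) (U W : R -> R -> R) :
  0 < T ->
  setval_lipschitz G ->
  (forall y, G y !=set0) ->
  convex_valued G ->
  (forall y, closed (G y)) ->
  {within [set p : R * R | 0 <= p.1 <= T], continuous (fun p : R * R => U p.1 p.2)} ->
  {within [set p : R * R | 0 <= p.1 <= T], continuous (fun p : R * R => W p.1 p.2)} ->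
  (* (U1) *)
  (forall x, Sol T G x -> forall t1 t2, 0 <= t1 -> t1 < t2 -> t2 <= T ->
      U t2 (x t2) <= U t1 (x t1)) ->
  (* (U2) *)
  (forall t0 x0, 0 <= t0 -> t0 <= T ->
      exists2 xb, Sol_at T G t0 x0 xb &
        forall t, 0 <= t -> t <= t0 -> U t (xb t) = U t0 x0) ->
  (* (W1) *)
  (forall x, Sol T G x -> forall t1 t2, 0 <= t1 -> t1 < t2 -> t2 <= T ->
      W t2 (x t2) <= W t1 (x t1)) ->
  (* (W2) *)
  (forall t0 x0, 0 <= t0 -> t0 <= T ->
      exists2 xt, Sol_at T G t0 x0 xt &
        forall t, t0 <= t -> t <= T -> W t0 x0 = W t (xt t)) ->
  (forall y, U 0 y = W 0 y) ->
  (forall y, U T y = W T y) ->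
  forall t y, 0 <= t -> t <= T -> U t y = W t y.
Proof.
move=> T_gt0 _ _ _ _ Uc _ U_nonincr U_backward W_nonincr W_forward UW0 UWT t0 x0 t0_ge0 t0_leT.
have T_ge0 := ltW T_gt0.
have [xb xb_sol xb_level] := U_backward t0 x0 t0_ge0 t0_leT.
have [xt xt_sol xt_level] := W_forward t0 x0 t0_ge0 t0_leT.
have [v v_sol v_level] := U_backward T (xt T) T_ge0 (lexx T).
have U0_cont : continuous (U 0).
  by apply: (continuous_within_slice Uc) => y /=; rewrite lexx T_ge0.
apply: (continuous_two_valued_eq U0_cont (a := xb 0) (b := v 0)).
- exact: xb_level.
- by rewrite v_level // UWT -xt_level.
- exact: (U0_two_valued T_ge0 U_nonincr U_backward W_nonincr W_forward UW0 UWT t0_ge0 t0_leT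
    xb_sol xb_level xt_sol xt_level v_sol v_level).
Qed.
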